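(* Every online algorithm for Ordered Open End Bin Packing (where $1$-items may occur) has absolute competitive ratio at least $2$.
   Context: Ordered Open End Bin Packing (online): items with sizes in $(0,1]$ arrive one by one (items of size at least $1$ are treated as having size exactly $1$ and are called $1$-items). Each item must be assigned irrevocably upon arrival, without knowledge of future items, to a bin whose current total size is strictly below $1$ (possibly a new, empty bin). The cost is the number of bins used. $\mathrm{OPT}(I)$ is the minimum number of bins in an offline packing of the sequence $I$ obeying the same rule (items are added to bins in the order of the sequence, and an item can be added to a bin only if the bin's current total size is strictly below $1$). The absolute competitive ratio of an algorithm $\mathrm{ALG}$ is $\sup_I \mathrm{ALG}(I)/\mathrm{OPT}(I)$ over all nonempty inputs $I$. *)

From HB Require Import structures.
From mathcomp Require Import all_boot all_order all_algebra.
From mathcomp Require Import boolp reals.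
Set Implicit Arguments. Unset Strict Implicit. Unset Printing Implicit Defensive.
Import Order.TTheory GRing.Theory Num.Theory.
Local Open Scope ring_scope.

Section OOEBP.
Variable R : realType.

(** An input: a sequence of item sizes, each in (0,1]
    (items of size >= 1 are treated as size exactly 1). *)
Definition valid_input (I : seq R) : Prop :=
  forall x, x \in I -> 0 < x <= 1.

(** A packing of I is a sequence of bin labels [a], item i going to bin
    [nth 0 a i]. *)
Definition load (I : seq R) (a : seq nat) (i : nat) : R :=
  \sum_(0 <= j < i | nth 0%N a j == nth 0%N a i) nth 0 I j.

Definition feasible (I : seq R) (a : seq nat) : Prop :=
  size a = size I /\ forall i, (i < size I)%N -> load I a i < 1.

Definition nbins (a : seq nat) : nat := size (undup a).

Lemma feasible_exists (I : seq R) :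
  exists k, `[< exists a, feasible I a /\ nbins a = k >].
Proof.
exists (nbins (iota 0 (size I))); apply/asboolP.
exists (iota 0 (size I)); split => //; split; first by rewrite size_iota.
move=> i Hi; rewrite /load big_nat_cond big1 ?ltr01 // => j /andP[/andP[_ Hj]].
rewrite !nth_iota ?(ltn_trans Hj Hi) // !add0n => /eqP E.
by rewrite E ltnn in Hj.
Qed.

Definition OPT (I : seq R) : nat := ex_minn (feasible_exists I).

(** A deterministic online algorithm: given the items seen so far and the
    current item, it returns the label of the bin receiving the item
    (a label not used before means a new bin). *)
Definition online_alg := seq R -> R -> nat.

Definition alg_assign (A : online_alg) (I : seq R) : seq nat :=
  [seq A (take i I) (nth 0 I i) | i <- iota 0 (size I)].

Definition ALG (A : online_alg) (I : seq R) : nat := nbins (alg_assign A I).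

Definition valid_alg (A : online_alg) : Prop :=
  forall I, valid_input I -> feasible I (alg_assign A I).

End OOEBP.

From HB Require Import structures.
From mathcomp Require Import all_boot all_order all_algebra.
From mathcomp Require Import boolp reals.
From mathcomp Require Import zify lra.
Set Implicit Arguments. Unset Strict Implicit. Unset Printing Implicit Defensive.
Import Order.TTheory GRing.Theory Num.Theory.
Local Open Scope ring_scope.

(* The adversary feeds rounds of three items eps, 1 - eps, 1, where eps is so
   small that all eps-items fit together in one bin.  As long as the algorithm
   puts the (1 - eps)-item of a round into the bin of that round's eps-item,
   this bin reaches load 1 and is closed for good, and so is the bin of the
   following 1-item; hence the eps-item and the 1-item of every round open new
   bins.  After N such rounds ALG >= 2N, while OPT <= N + 1 (one bin for the
   eps-items, one per round for the other two).  If instead the algorithm opens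
   a new bin for the (1 - eps)-item of round j, the input stops there: then
   ALG >= 2j + 2 and OPT <= j + 1.  Either way ALG / OPT >= 2N / (N + 1), which
   exceeds any r < 2 for N large. *)

Lemma ler_psum_uniq_sub (R : numDomainType) (I : eqType) (F : I -> R)
    (s t : seq I) :
  (forall i, 0 <= F i) -> uniq s -> uniq t -> {subset s <= t} ->
  \sum_(i <- s) F i <= \sum_(i <- t) F i.
Proof.
move=> F_ge0 s_uniq t_uniq sub_st.
have perm_s : perm_eq (filter (mem s) t) s.
  apply: uniq_perm => //; first exact: filter_uniq.
  by move=> i; rewrite mem_filter andb_idr //; apply: sub_st.
rewrite [X in _ <= X](bigID (mem s)) /= -[X in _ <= X + _]big_filter.
by rewrite (perm_big _ perm_s) lerDl sumr_ge0.
Qed.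

Lemma first_failure (P : pred nat) n :
  (forall j, (j < n)%N -> P j) \/
  exists2 j, (j < n)%N & (forall i, (i < j)%N -> P i) /\ ~~ P j.
Proof.
elim: n => [|n [all_P | [j lt_jn Pj]]]; first by left.
- case Pn: (P n); [left | right].
    by move=> j; rewrite ltnS leq_eqVlt => /predU1P [-> | /all_P].
  by exists n => //; split => //; rewrite Pn.
- by right; exists j => //; apply: ltnW.
Qed.

Lemma nbins_rcons (s : seq nat) x :
  nbins (rcons s x) = ((x \notin s) + nbins s)%N.
Proof.
rewrite /nbins undup_rcons size_rcons size_filter.
have := count_predC (pred1 x) (undup s).
rewrite count_uniq_mem ?undup_uniq // mem_undup.
by case: (x \in s) => /= <-; rewrite ?addnK ?add1n.
Qed.

Lemma nbins_mkseq (g : nat -> nat) n :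
  nbins (mkseq g n) = count (fun k => g k \notin mkseq g k) (iota 0 n).
Proof.
elim: n => [|n IHn] //.
by rewrite mkseqS nbins_rcons IHn -addn1 iotaD count_cat /= addn0 addnC.
Qed.

Lemma nbins_bounded (a : seq nat) m : all (fun x => x < m)%N a -> (nbins a <= m)%N.
Proof.
move=> /allP a_lt; rewrite -[m](size_iota 0).
by apply: uniq_leq_size (undup_uniq a) _ => x; rewrite mem_undup mem_iota => /a_lt.
Qed.

Lemma OPT_le_nbins (R : realType) (I : seq R) a :
  feasible I a -> (OPT I <= nbins a)%N.
Proof.
by move=> feasible_a; rewrite /OPT; case: ex_minnP => k _; apply; apply/asboolP; exists a.
Qed.

Lemma OPT_gt0 (R : realType) (I : seq R) : I != [::] -> (0 < OPT I)%N.
Proof.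
rewrite /OPT; case: ex_minnP => k /asboolP [a [[size_a _] <-]] _ I_nonempty.
rewrite lt0n size_eq0; apply: contra I_nonempty => /eqP /undup_nil a_nil.
by rewrite -size_eq0 -size_a a_nil.
Qed.

Section OnlineStream.
Variables (R : realType) (A : online_alg R) (f : nat -> R).
Hypothesis A_valid : valid_alg A.
Hypothesis f_valid : forall i, 0 < f i <= 1.

Definition online_label i := A (mkseq f i) (f i).

Definition opens_bin k := online_label k \notin mkseq online_label k.

Lemma opens_binP k :
  reflect (forall q, (q < k)%N -> online_label q != online_label k) (opens_bin k).
Proof.
apply: (iffP idP) => [fresh q lt_qk | distinct].
  by apply: contraNneq fresh => <-; apply: map_f; rewrite mem_iota.
apply/mapP => [[q]]; rewrite mem_iota => /andP [_ lt_qk] eq_label.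
by have := distinct q lt_qk; rewrite eq_label eqxx.
Qed.

Lemma valid_input_mkseq n : valid_input (mkseq f n).
Proof. by move=> x /mapP [i _ ->]. Qed.

Lemma alg_assign_mkseq n : alg_assign A (mkseq f n) = mkseq online_label n.
Proof.
rewrite /alg_assign size_mkseq; apply/eq_in_map => i.
rewrite mem_iota => /andP [_ lt_in].
by rewrite nth_mkseq // /mkseq -map_take take_iota (minn_idPl (ltnW lt_in)).
Qed.

Lemma ALG_mkseq n : ALG A (mkseq f n) = count opens_bin (iota 0 n).
Proof. by rewrite /ALG alg_assign_mkseq nbins_mkseq. Qed.

Lemma load_mkseq (a : nat -> nat) n i : (i < n)%N ->
  load (mkseq f n) (mkseq a n) i = \sum_(0 <= j < i | a j == a i) f j.
Proof.
move=> lt_in; rewrite /load nth_mkseq //.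
apply: congr_big_nat => // j => [/andP [_ lt_ji] | /andP [_ /andP [_ lt_ji]]];
  by rewrite nth_mkseq // (ltn_trans lt_ji lt_in).
Qed.

Lemma online_load_lt1 i :
  \sum_(0 <= j < i | online_label j == online_label i) f j < 1.
Proof.
have [_ load_lt1] := A_valid (valid_input_mkseq (n := i.+1)).
by have := load_lt1 i; rewrite size_mkseq alg_assign_mkseq load_mkseq // ltnSn; apply.
Qed.

Lemma full_bin_closed (s : seq nat) p l :
  uniq s -> {in s, forall q, q < p /\ online_label q = l}%N ->
  1 <= \sum_(q <- s) f q -> online_label p != l.
Proof.
move=> s_uniq s_in_bin full; apply/eqP => label_p.
have := online_load_lt1 p; apply/negP; rewrite -leNgt.
apply: le_trans full _; rewrite -[X in _ <= X]big_filter.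
apply: ler_psum_uniq_sub => //.
- by move=> q; have /andP [/ltW] := f_valid q.
- by apply: filter_uniq; apply: iota_uniq.
- move=> q q_in_s; have [lt_qp label_q] := s_in_bin q q_in_s.
  by rewrite mem_filter mem_index_iota lt_qp label_q label_p eqxx.
Qed.

Lemma unit_item_bin_closed q p :
  (q < p)%N -> f q = 1 -> online_label q != online_label p.
Proof.
move=> lt_qp unit_q; rewrite eq_sym.
apply: (full_bin_closed (s := [:: q])) => [|k|]; rewrite ?inE ?big_seq1 ?unit_q //.
by move=> /eqP ->.
Qed.

End OnlineStream.

Section Adversary.
Variables (R : realType) (A : online_alg R).
Hypothesis A_valid : valid_alg A.
Variables (N : nat) (eps : R).
Hypotheses (N_gt0 : (0 < N)%N) (eps_gt0 : 0 < eps).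
Hypothesis eps_small : (3 * N)%:R * eps < 1.

Definition item i : R :=
  if (i %% 3 == 0)%N then eps else if (i %% 3 == 1)%N then 1 - eps else 1.

Lemma item_round0 j : item (3 * j) = eps.
Proof. by rewrite /item; have -> : ((3 * j) %% 3 = 0)%N by lia. Qed.

Lemma item_round1 j : item (3 * j).+1 = 1 - eps.
Proof. by rewrite /item; have -> : ((3 * j).+1 %% 3 = 1)%N by lia. Qed.

Lemma item_round2 j : item (3 * j).+2 = 1.
Proof. by rewrite /item; have -> : ((3 * j).+2 %% 3 = 2)%N by lia. Qed.

Lemma item_valid i : 0 < item i <= 1.
Proof.
have eps_lt1 : eps < 1.
  apply: le_lt_trans eps_small; rewrite ler_peMl ?(ltW eps_gt0) // ler1n; lia.
have := eps_gt0.
rewrite /item => ?; case: ifP => _; last case: ifP => _.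
all: by apply/andP; split; lra.
Qed.

Local Notation label := (online_label A item).
Local Notation opens_bin := (opens_bin A item).

Definition round_paired j := label (3 * j).+1 == label (3 * j).

Lemma paired_bin_closed j p : round_paired j -> (3 * j + 2 <= p)%N ->
  label (3 * j) != label p.
Proof.
move=> /eqP paired le_p; rewrite eq_sym.
apply: (full_bin_closed A_valid item_valid (s := [:: 3 * j; (3 * j).+1])).
- by rewrite /= inE; lia.
- by move=> k; rewrite !inE => /orP [] /eqP ->; rewrite ?paired; split => //; lia.
- by rewrite !big_cons big_nil item_round0 item_round1 addr0 addrC subrK.
Qed.

Lemma paired_round_closed q p : round_paired (q %/ 3) -> (3 * (q %/ 3) + 2 <= p)%N ->
  (q < p)%N -> label q != label p.
Proof.
move=> paired le_p lt_qp.
have [-> | [-> | q_last]] :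
    (q = 3 * (q %/ 3) \/ q = (3 * (q %/ 3)).+1 \/ q = (3 * (q %/ 3)).+2)%N.
  by lia.
- exact: paired_bin_closed.
- by rewrite (eqP paired); apply: paired_bin_closed.
- by apply: (unit_item_bin_closed A_valid item_valid) => //; rewrite q_last item_round2.
Qed.

Lemma opens_bin_round_start j :
  (forall i, (i < j)%N -> round_paired i) -> opens_bin (3 * j).
Proof.
move=> paired; apply/opens_binP => q lt_q.
by apply: paired_round_closed; [apply: paired; lia | lia | lia].
Qed.

Lemma opens_bin_round_end j :
  (forall i, (i <= j)%N -> round_paired i) -> opens_bin (3 * j).+2.
Proof.
move=> paired; apply/opens_binP => q lt_q.
by apply: paired_round_closed; [apply: paired; lia | lia | lia].
Qed.

Lemma opens_bin_unpaired j :
  (forall i, (i < j)%N -> round_paired i) -> ~~ round_paired j ->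
  opens_bin (3 * j).+1.
Proof.
move=> paired unpaired; apply/opens_binP => q.
rewrite ltnS leq_eqVlt => /predU1P [-> | lt_q]; first by rewrite eq_sym.
by apply: paired_round_closed; [apply: paired; lia | lia | lia].
Qed.

Lemma ALG_paired_rounds m :
  (forall j, (j < m)%N -> round_paired j) -> (2 * m <= ALG A (mkseq item (3 * m)))%N.
Proof.
rewrite ALG_mkseq; elim: m => [|m IHm] paired //.
have start := opens_bin_round_start (fun j lt_jm => paired j (ltnW lt_jm)).
have finish := opens_bin_round_end (fun j le_jm => paired j le_jm).
have first_rounds := IHm (fun j lt_jm => paired j (ltnW lt_jm)).
have -> : (3 * m.+1 = 3 * m + 3)%N by lia.
rewrite iotaD count_cat add0n.
have -> : iota (3 * m) 3 = [:: 3 * m; (3 * m).+1; (3 * m).+2]%N by [].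
by rewrite /= start finish; lia.
Qed.

Lemma ALG_unpaired_round j :
  (forall i, (i < j)%N -> round_paired i) -> ~~ round_paired j ->
  (2 * j + 2 <= ALG A (mkseq item (3 * j).+2))%N.
Proof.
move=> paired unpaired; have := ALG_paired_rounds paired.
rewrite !ALG_mkseq => first_rounds.
have -> : ((3 * j).+2 = 3 * j + 2)%N by lia.
rewrite iotaD count_cat add0n.
have -> : iota (3 * j) 2 = [:: 3 * j; (3 * j).+1]%N by [].
by rewrite /= opens_bin_round_start // opens_bin_unpaired //; lia.
Qed.

(* The (1 - eps)-item of an unfinished round m joins the eps-items in bin 0. *)
Definition opt_label m i : nat :=
  (if (i %% 3 == 0) || (3 * m <= i) then 0 else (i %/ 3).+1)%N.

Lemma nbins_opt_label m n : (nbins (mkseq (opt_label m) n) <= m.+1)%N.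
Proof.
apply: nbins_bounded; apply/allP => _ /mapP [i _ ->]; rewrite /opt_label.
by case: ifP => // /negbT; rewrite negb_or -ltnNge => /andP [_ lt_i]; lia.
Qed.

Lemma opt_label0_item m k : opt_label m k = 0%N -> (k.+1 < 3 * m + 2)%N ->
  item k = eps.
Proof.
rewrite /opt_label /item; case: ifP => // /orP [/eqP -> // | le_mk] _ lt_k.
by have -> : (k %% 3 = 0)%N by lia.
Qed.

Lemma opt_label_pair m k i : opt_label m i != 0%N -> (k < i)%N ->
  opt_label m k = opt_label m i -> k = (3 * (i %/ 3)).+1.
Proof.
rewrite /opt_label; case: ifP => // /norP [i_mod i_lt] _ lt_ki.
by case: ifP => // /norP [k_mod k_lt] [same_round]; lia.
Qed.

Lemma opt_label_feasible m n : (n <= 3 * m + 2)%N -> (n <= 3 * N)%N ->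
  feasible (mkseq item n) (mkseq (opt_label m) n).
Proof.
move=> le_n_m le_n_N; split=> [|i]; rewrite !size_mkseq // => lt_in.
rewrite load_mkseq //.
have item_ge0 k : 0 <= item k by have /andP [/ltW] := item_valid k.
have [label0 | label_pos] := eqVneq (opt_label m i) 0%N.
- apply: le_lt_trans eps_small; rewrite label0.
  apply: (@le_trans _ _ (\sum_(0 <= k < i) eps)).
    rewrite big_mkcond /=; apply: ler_sum_nat => k /andP [_ lt_ki].
    by case: ifP => [/eqP /opt_label0_item -> // | _]; [lia | exact: ltW].
  by rewrite sumr_const_nat subn0 -[eps *+ i]mulr_natl ler_pM2r // ler_nat; lia.
- apply: (@le_lt_trans _ _ (\sum_(k <- [:: (3 * (i %/ 3)).+1]) item k)).
    rewrite -big_filter; apply: ler_psum_uniq_sub => //.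
      by apply: filter_uniq; apply: iota_uniq.
    move=> k; rewrite mem_filter mem_index_iota inE.
    case/andP => /eqP label_k /andP [_ lt_ki].
    by rewrite (opt_label_pair label_pos lt_ki label_k).
  by rewrite big_seq1 item_round1 gtrBl.
Qed.

Lemma OPT_rounds m n : (n <= 3 * m + 2)%N -> (n <= 3 * N)%N ->
  (OPT (mkseq item n) <= m.+1)%N.
Proof.
move=> le_n_m le_n_N.
exact: leq_trans (OPT_le_nbins (opt_label_feasible le_n_m le_n_N)) (nbins_opt_label m n).
Qed.

Lemma adversary_input : exists I : seq R,
  [/\ valid_input I, I != [::] & (2 * N * OPT I <= N.+1 * ALG A I)%N].
Proof.
have [paired | [j lt_jN [paired unpaired]]] := first_failure round_paired N.
- exists (mkseq item (3 * N)); split.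
  + exact: (@valid_input_mkseq _ _ item_valid _).
  + by rewrite -size_eq0 size_mkseq; lia.
  + have := ALG_paired_rounds paired.
    have := @OPT_rounds N (3 * N); nia.
- exists (mkseq item (3 * j).+2); split.
  + exact: (@valid_input_mkseq _ _ item_valid _).
  + by rewrite -size_eq0 size_mkseq.
  + have := ALG_unpaired_round paired unpaired.
    have := @OPT_rounds j (3 * j).+2; nia.
Qed.

End Adversary.

Theorem mainTheorem4 (R : realType) (A : online_alg R) :
  valid_alg A ->
  forall r : R, r < 2 ->
  exists I : seq R, [/\ valid_input I, I != [::] &
    r < (ALG A I)%:R / (OPT I)%:R].
Proof.
move=> A_valid r lt_r2.
pose N := (Num.truncn (2 / (2 - r))).+1.
have large_N : r * N.+1%:R < 2 * N%:R.
  have := truncnS_gt (2 / (2 - r)); rewrite -/N ltr_pdivrMr ?subr_gt0 //.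
  rewrite -[N.+1%:R]natr1; nra.
pose eps : R := (3 * N).+1%:R^-1.
have eps_gt0 : 0 < eps by rewrite invr_gt0 ltr0n.
have eps_small : (3 * N)%:R * eps < 1.
  by rewrite ltr_pdivrMr ?ltr0n // mul1r ltr_nat.
have [I [I_valid I_nonempty ratio]] :=
  adversary_input A_valid (ltn0Sn _) eps_gt0 eps_small.
exists I; split => //.
have OPT_pos : 0 < (OPT I)%:R :> R by rewrite ltr0n OPT_gt0.
rewrite ltr_pdivlMr //.
have N1_pos : 0 < N.+1%:R :> R by rewrite ltr0n.
have : (2 * N * OPT I)%:R <= (N.+1 * ALG A I)%:R :> R by rewrite ler_nat.
rewrite !natrM; nra.
Qed.
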